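(* Let $\mathfrak{P}$ be a nonempty compact set of probability distributions $P=(p_\omega)_{\omega\in\Omega}$ on $\Omega$ and $\Phi_A(\mathbf{x})=\max_{P\in\mathfrak{P}}\sum_{\omega\in\Omega}p_\omega Q_\omega(\mathbf{x})$. Let $\hat{\mathbf{x}}\in\mathcal{X}$, for each $\omega$ let $\hat{\mathbf{S}}^\omega$ be an optimal solution of the problem defining $Q_\omega(\hat{\mathbf{x}})$, and let $(\hat p_\omega)_{\omega\in\Omega}\in\arg\max_{P\in\mathfrak{P}}\sum_{\omega\in\Omega}p_\omega f^\omega(\hat{\mathbf{S}}^\omega)$. For each $\omega,q$ fix an ordering $\hat S^\omega_q=\{i^\omega_{q,1},\dots,i^\omega_{q,T^\omega_q}\}$ and for $1\le t\le T^\omega_q$ let $\hat{\mathbf{S}}^\omega_{q,(t)}=(\hat S^\omega_1,\dots,\hat S^\omega_{q-1},\{i^\omega_{q,1},\dots,i^\omega_{q,t-1}\},\emptyset,\dots,\emptyset)$. Then for every $\mathbf{x}\in\mathcal{X}$, $$\Phi_A(\mathbf{x})\;\ge\;\Phi_A(\hat{\mathbf{x}})-\sum_{q=1}^k\sum_{\omega\in\Omega}\sum_{t=1}^{T^\omega_q}\hat p_\omega\,\rho^\omega_{q,i^\omega_{q,t}}(\hat{\mathbf{S}}^\omega_{q,(t)})\,\xi^\omega_{i^\omega_{q,t}}\,x_{q,i^\omega_{q,t}}.$$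
   Context: Let $n,k$ be positive integers and $N=\{1,\dots,n\}$. $\mathbb{X}(N,k)$ denotes the set of $k$-tuples $\mathbf{S}=(S_1,\dots,S_k)$ of pairwise disjoint subsets of $N$; such a tuple is identified with $\mathbf{s}\in\{0,1\}^{kn}$ where $s_{q,i}=1$ iff $i\in S_q$. For $\mathbf{X},\mathbf{Y}\in\mathbb{X}(N,k)$ let $\mathbf{X}\sqcap\mathbf{Y}=(X_1\cap Y_1,\dots,X_k\cap Y_k)$ and $\mathbf{X}\sqcup\mathbf{Y}$ be the tuple whose $i$-th component is $(X_i\cup Y_i)\setminus\bigcup_{q\ne i}(X_q\cup Y_q)$. A function $f:\mathbb{X}(N,k)\to\mathbb{R}$ is $k$-submodular if $f(\mathbf{X})+f(\mathbf{Y})\ge f(\mathbf{X}\sqcap\mathbf{Y})+f(\mathbf{X}\sqcup\mathbf{Y})$ for all $\mathbf{X},\mathbf{Y}$, and monotone if $f(\mathbf{X})\le f(\mathbf{Y})$ whenever $X_q\subseteq Y_q$ for all $q$. $\boldsymbol{\emptyset}=(\emptyset,\dots,\emptyset)$. Given nonnegative integer budgets $A_1,\dots,A_k$ and $D_1,\dots,D_k$, the attacker's feasible set is $\mathcal{X}=\{\mathbf{x}\in\{0,1\}^{kn}:\sum_{i=1}^n x_{q,i}\le A_q\ \forall q,\ \sum_{q=1}^k x_{q,i}\le 1\ \forall i\in N\}$. Stochastic setting: $\Omega$ is a finite set of scenarios; for each $\omega\in\Omega$ we are given $\xi^\omega\in\{0,1\}^n$ and a monotone $k$-submodular function $f^\omega:\mathbb{X}(N,k)\to\mathbb{R}$,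 with marginal gains $\rho^\omega_{q,i}(\mathbf{X})=f^\omega(X_1,\dots,X_q\cup\{i\},\dots,X_k)-f^\omega(\mathbf{X})$ for $i\notin\bigcup_r X_r$. For $\mathbf{x}\in\mathcal{X}$, $Q_\omega(\mathbf{x})=\max\{f^\omega(\mathbf{S}):\mathbf{S}\in\mathbb{X}(N,k),\ s_{q,i}\le 1-x_{q,i}\xi^\omega_i\ \forall q,i,\ \sum_{i=1}^n s_{q,i}\le D_q\ \forall q\}$. *)

From HB Require Import structures.
From mathcomp Require Import all_boot all_order all_algebra.
From mathcomp Require Import all_classical all_reals all_analysis.
Set Implicit Arguments. Unset Strict Implicit. Unset Printing Implicit Defensive.
Import Order.TTheory GRing.Theory Num.Theory.
Import numFieldNormedType.Exports.
Local Open Scope ring_scope.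

(* An element of X(N,k) (k-tuple of pairwise disjoint subsets of N = 'I_n)
   is encoded as its labeling: S i = Some q  iff  i \in S_q,
   S i = None iff i is in no S_q. *)
Definition kset (n k : nat) := {ffun 'I_n -> option 'I_k}.

Definition kempty (n k : nat) : kset n k := [ffun _ => None].

Definition comp n k (X : kset n k) (q : 'I_k) : {set 'I_n} :=
  [set i | X i == Some q].

Definition kmeet n k (X Y : kset n k) : kset n k :=
  [ffun i => if X i == Y i then X i else None].

(* X ⊔ Y : i-th component is (X_i ∪ Y_i) minus the other unions *)
Definition kjoin n k (X Y : kset n k) : kset n k :=
  [ffun i => match X i, Y i with
             | None, b => b
             | a, None => a
             | Some a, Some b => if a == b then Some a else None
             end].

Definition k_submodular n k (R : realType) (f : kset n k -> R) :=
  forall X Y : kset n k, f (kmeet X Y) + f (kjoin X Y) <= f X + f Y.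

Definition ksubset n k (X Y : kset n k) :=
  forall q : 'I_k, comp X q \subset comp Y q.

Definition k_monotone n k (R : realType) (f : kset n k -> R) :=
  forall X Y : kset n k, ksubset X Y -> f X <= f Y.

Definition kadd n k (X : kset n k) (q : 'I_k) (i : 'I_n) : kset n k :=
  [ffun j => if j == i then Some q else X j].

Definition marg n k (R : realType) (f : kset n k -> R) (q : 'I_k) (i : 'I_n)
  (X : kset n k) : R := f (kadd X q i) - f X.

(* attacker feasibility: x in \mathcal X (the constraint sum_q x_{q,i} <= 1
   is built into the encoding) *)
Definition attacker_feasible n k (A : 'I_k -> nat) (x : kset n k) :=
  forall q : 'I_k, (#|comp x q| <= A q)%N.

Definition xval n k (x : kset n k) (q : 'I_k) (i : 'I_n) : bool := x i == Some q.

Definition def_feasible n k (D : 'I_k -> nat) (xi : 'I_n -> bool)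
  (x : kset n k) (S : kset n k) : bool :=
  [forall q : 'I_k, [forall i : 'I_n,
      (S i == Some q) ==> ~~ (xval x q i && xi i)]]
  && [forall q : 'I_k, (#|comp S q| <= D q)%N].

(* Q_omega(x) = max of f over defender-feasible S (S = empty is feasible) *)
Definition Qval n k (R : realType) (D : 'I_k -> nat) (xi : 'I_n -> bool)
  (f : kset n k -> R) (x : kset n k) : R :=
  \big[Num.max/f (kempty n k)]_(S : kset n k | def_feasible D xi x S) f S.

Definition prob_dist (R : realType) m (P : 'rV[R]_m) :=
  (forall w : 'I_m, 0 <= P 0 w) /\ \sum_(w < m) P 0 w = 1.

(* Phi_A(x) = max_{P in frakP} sum_w p_w Q_w(x); the max exists by
   compactness, so it equals the supremum. *)
Definition PhiA n k m (R : realType) (frakP : set 'rV[R]_m)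
  (D : 'I_k -> nat) (xi : 'I_m -> 'I_n -> bool) (f : 'I_m -> kset n k -> R)
  (x : kset n k) : R :=
  sup [set \sum_(w < m) P 0 w * Qval D (xi w) (f w) x | P in frakP].

(* Ŝ_{q,(t)} (with t 0-indexed: the q-th component consists of the first t
   elements of the ordering ord of Ŝ_q) *)
Definition Spart n k (S : kset n k) (q : 'I_k) (ord : seq 'I_n) (t : nat)
  : kset n k :=
  [ffun i => match S i with
             | Some r => if (r < q)%N then Some r
                         else if (r == q) && (i \in take t ord) then Some q
                         else None
             | None => None
             end].

From Pilot Require Import Defs.
From HB Require Import structures.
From mathcomp Require Import all_boot all_order all_algebra.
From mathcomp Require Import all_classical all_reals all_analysis.
From mathcomp Require Import lra.
Import Order.TTheory GRing.Theory Num.Theory.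
Import numFieldNormedType.Exports.
Local Open Scope ring_scope.
Set Implicit Arguments. Unset Strict Implicit. Unset Printing Implicit Defensive.

(* For each scenario, removing from the optimal defence [Shat w] the elements
   attacked by [x] gives a defence feasible against [x].  Rebuilding [Shat w]
   element by element along the chain [Spart], k-submodularity (diminishing
   marginal gains) bounds the value lost by this removal by the sum of the
   marginal gains of the removed elements along the chain.  Averaging with
   [phat], whose expected value of the [Shat w] dominates [Phi_A(xhat)] by
   their optimality, gives the cut. *)

(* [kadd] alone would resolve to the sum of kernels of MathComp-Analysis,
   hence [Defs.kadd] below. *)
Definition kprune n k (rm : 'I_n -> bool) (X : kset n k) : kset n k :=
  [ffun i => if rm i then None else X i].

Definition kprefix n k (S : kset n k) (j : nat) : kset n k :=
  [ffun i => if S i is Some r then if (r < j)%N then Some r else None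
             else None].

Lemma ksubset_Some n k (X Y : kset n k) j r :
  ksubset X Y -> X j = Some r -> Y j = Some r.
Proof.
move=> /(_ r) /fintype.subsetP /(_ j) hXY hX.
by move: hXY; rewrite !inE hX eqxx => /(_ isT) /eqP.
Qed.

Lemma ksubset_kprune n k rm (X : kset n k) : ksubset (kprune rm X) X.
Proof.
move=> q; apply/fintype.subsetP => j; rewrite !inE ffunE.
by case: (rm j).
Qed.

Lemma kprune_kadd n k rm (X : kset n k) q a :
  kprune rm (Defs.kadd X q a) =
  if rm a then kprune rm X else Defs.kadd (kprune rm X) q a.
Proof.
apply/ffunP => j; case h: (rm a); rewrite !ffunE.
  by case: (eqVneq j a) => [->|]; rewrite ?h.
by case: (eqVneq j a) => [->|]; rewrite ?h //= ffunE.
Qed.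

Lemma kprune_kprefix0 n k rm (S : kset n k) :
  kprune rm (kprefix S 0) = kprefix S 0.
Proof.
by apply/ffunP => i; rewrite !ffunE; case: (rm i) => //; case: (S i).
Qed.

Lemma kprefix_k n k (S : kset n k) : kprefix S k = S.
Proof. by apply/ffunP => i; rewrite ffunE; case: (S i) => // r; rewrite ltn_ord. Qed.

Section SpartChain.

Variables (n k : nat) (S : kset n k) (q : 'I_k) (o : seq 'I_n).
Hypotheses (o_uniq : uniq o) (mem_o : forall i, (i \in o) = (S i == Some q)).

Lemma nth_order_Some t x0 : (t < size o)%N -> S (nth x0 o t) = Some q.
Proof. by move=> ht; apply/eqP; rewrite -mem_o mem_nth. Qed.

Lemma Spart_succ t x0 : (t < size o)%N ->
  Spart S q o t.+1 = Defs.kadd (Spart S q o t) q (nth x0 o t).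
Proof.
move=> ht; apply/ffunP => j.
rewrite !ffunE (take_nth x0 ht) -cats1 mem_cat mem_seq1.
case: (eqVneq j (nth x0 o t)) => [->|_]; last by rewrite orbF.
by rewrite nth_order_Some // ltnn eqxx orbT.
Qed.

Lemma Spart_nth t x0 : (t < size o)%N -> Spart S q o t (nth x0 o t) = None.
Proof.
move=> ht; rewrite ffunE nth_order_Some // ltnn eqxx /=.
by rewrite in_take_leq ?(ltnW ht) // index_uniq // ltnn.
Qed.

Lemma Spart0 : Spart S q o 0 = kprefix S q.
Proof.
apply/ffunP => j; rewrite !ffunE take0 in_nil.
by case: (S j) => // r; rewrite andbF.
Qed.

Lemma Spart_size : Spart S q o (size o) = kprefix S q.+1.
Proof.
apply/ffunP => j; rewrite !ffunE take_size mem_o.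
case: (S j) => [r|] //; case: (ltngtP r q) => h.
- by rewrite ltnS ltnW.
- by rewrite ltnS leqNgt h -val_eqE /= gtn_eqF.
- by rewrite (val_inj h) !eqxx ltnSn.
Qed.

End SpartChain.

Section PruneLoss.

Variables (n k : nat) (R : realType) (f : kset n k -> R).
Hypothesis f_sub : k_submodular f.

Lemma marg_le_ksubset (X Y : kset n k) q i : ksubset X Y -> Y i = None ->
  marg f q i Y <= marg f q i X.
Proof.
move=> hXY hYi.
have hXi : X i = None.
  by case E: (X i) => [r|] //; rewrite (ksubset_Some hXY E) in hYi.
have := f_sub (Defs.kadd X q i) Y.
have -> : kmeet (Defs.kadd X q i) Y = X.
  apply/ffunP => j; rewrite !ffunE.
  case: (eqVneq j i) => [->|_]; first by rewrite hXi hYi.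
  case E: (X j) => [r|] /=; first by rewrite (ksubset_Some hXY E) eqxx.
  by case: (Y j).
have -> : kjoin (Defs.kadd X q i) Y = Defs.kadd Y q i.
  apply/ffunP => j; rewrite !ffunE.
  case: (eqVneq j i) => [->|_]; first by rewrite hYi.
  by case E: (X j) => [r|] //=; rewrite (ksubset_Some hXY E) eqxx.
rewrite /marg; lra.
Qed.

(* Each step of the chain either keeps the added element, losing nothing new,
   or prunes it, losing at most its marginal gain along the chain, since the
   pruned set is contained in the chain set. *)
Lemma prune_loss_chain rm (o : seq 'I_n) q (C : nat -> kset n k) :
  uniq o ->
  (forall t x0, (t < size o)%N -> C t.+1 = Defs.kadd (C t) q (nth x0 o t)) ->
  (forall t x0, (t < size o)%N -> C t (nth x0 o t) = None) ->
  forall t, (t <= size o)%N ->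
  f (C t) - f (kprune rm (C t)) <=
  f (C 0%N) - f (kprune rm (C 0%N)) +
  \sum_(i <- take t o) marg f q i (C (index i o)) * (rm i)%:R.
Proof.
move=> o_uniq C_succ C_nth; elim=> [|t IH] ht; first by rewrite take0 big_nil addr0.
have x0 : 'I_n by move: ht; case: (o) => // a.
rewrite (take_nth x0 ht) -cats1 big_cat /= big_seq1 index_uniq //.
rewrite (C_succ t x0 ht) kprune_kadd.
have := IH (ltnW ht); case: (rm (nth x0 o t)); rewrite /marg => IHt.
  by rewrite mulr1; lra.
have := marg_le_ksubset q (ksubset_kprune rm (C t)) (C_nth t x0 ht).
rewrite /marg mulr0 addr0; lra.
Qed.

Variables (S : kset n k) (o : 'I_k -> seq 'I_n).
Hypotheses (o_uniq : forall q, uniq (o q))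
           (mem_o : forall q i, (i \in o q) = (S i == Some q)).

Definition prune_bound rm (q : 'I_k) :=
  \sum_(i <- o q) marg f q i (Spart S q (o q) (index i (o q))) * (rm i)%:R.

Lemma prune_loss_kprefix rm j : (j <= k)%N ->
  f (kprefix S j) - f (kprune rm (kprefix S j)) <=
  \sum_(q < k | (q < j)%N) prune_bound rm q.
Proof.
elim: j => [|j IH] hj.
  by rewrite kprune_kprefix0 subrr big_pred0 // => q.
pose q0 := Ordinal hj.
have := prune_loss_chain rm (o_uniq q0) (fun t x0 => Spart_succ (mem_o q0) x0)
  (fun t x0 => Spart_nth (o_uniq q0) (mem_o q0) x0) (leqnn _).
rewrite take_size Spart0 Spart_size //= => hq0.
rewrite (bigD1 q0) ?ltnSn //= (eq_bigl (fun q : 'I_k => (q < j)%N)).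
  by have := IH (ltnW hj); rewrite /prune_bound; lra.
by move=> q; rewrite -val_eqE /= ltnS leq_eqVlt; case: ltngtP.
Qed.

Lemma prune_loss_le rm :
  f S - f (kprune rm S) <= \sum_(q < k) prune_bound rm q.
Proof.
have := prune_loss_kprefix rm (leqnn k).
by rewrite kprefix_k; under eq_bigl do rewrite ltn_ord.
Qed.

End PruneLoss.

Lemma def_feasible_kempty n k D (xi : 'I_n -> bool) (x : kset n k) :
  def_feasible D xi x (kempty n k).
Proof.
apply/andP; split; apply/forallP => q; first by apply/forallP => i; rewrite ffunE.
apply: leq_trans (leq0n (D q)); rewrite leqn0 cards_eq0.
by apply/eqP/setP => i; rewrite !inE ffunE.
Qed.

Lemma def_feasible_kprune n k D (xi : 'I_n -> bool) (y x S : kset n k) :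
  def_feasible D xi y S ->
  def_feasible D xi x (kprune (fun i => xi i && (x i == S i)) S).
Proof.
case/andP=> _ /forallP hcard; apply/andP; split; apply/forallP => q.
  apply/forallP => i; rewrite ffunE /xval.
  case: (xi i); last by rewrite andbF implybT.
  case: (eqVneq (x i) (S i)) => //= xS; apply/implyP => /eqP hS.
  by apply/negP => /andP [/eqP e _]; rewrite e hS eqxx in xS.
apply: leq_trans (hcard q); apply: subset_leq_card.
by apply/fintype.subsetP => i; rewrite !inE ffunE; case: ifP.
Qed.

Section Scenario.

Variables (n k : nat) (R : realType) (D : 'I_k -> nat) (xi : 'I_n -> bool)
          (f : kset n k -> R).

Lemma Qval_ge_feasible (x : kset n k) S :
  def_feasible D xi x S -> f S <= Qval D xi f x.
Proof. exact: le_bigmax_cond. Qed.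

Lemma Qval_le_opt (xhat Shat : kset n k) :
  (forall S, def_feasible D xi xhat S -> f S <= f Shat) ->
  Qval D xi f xhat <= f Shat.
Proof.
move=> Sopt; apply: bigmax_le => [|S hS]; last exact: Sopt.
exact/Sopt/def_feasible_kempty.
Qed.

Lemma Qval_ge_penalized (xhat Shat : kset n k) (o : 'I_k -> seq 'I_n) x :
  k_submodular f -> def_feasible D xi xhat Shat ->
  (forall q, uniq (o q)) -> (forall q i, (i \in o q) = (Shat i == Some q)) ->
  f Shat - \sum_(q < k) \sum_(i <- o q)
      marg f q i (Spart Shat q (o q) (index i (o q)))
      * (xi i)%:R * (xval x q i)%:R
  <= Qval D xi f x.
Proof.
move=> f_sub Sfeas o_uniq mem_o.
have := Qval_ge_feasible (def_feasible_kprune x Sfeas).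
set rm := fun i => xi i && (x i == Shat i).
have -> : \sum_(q < k) \sum_(i <- o q)
    marg f q i (Spart Shat q (o q) (index i (o q))) * (xi i)%:R * (xval x q i)%:R
    = \sum_(q < k) prune_bound f Shat o rm q.
  apply: eq_bigr => q _; rewrite /prune_bound big_seq [RHS]big_seq.
  apply: eq_bigr => i; rewrite mem_o /rm /xval => /eqP ->.
  by rewrite -mulrA; case: (xi i); case: (x i == Some q); rewrite /= ?mulr1 ?mulr0.
by have := prune_loss_le f_sub o_uniq mem_o rm; lra.
Qed.

End Scenario.

Local Open Scope classical_set_scope.

Section Ambiguity.

Variables (R : realType) (m : nat) (frakP : set 'rV[R]_m).
Hypothesis frakP_prob : forall P, frakP P -> prob_dist P.

Lemma weighted_sum_le_sup (g : 'I_m -> R) P : frakP P ->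
  \sum_(w < m) P 0 w * g w <= sup [set \sum_(w < m) P 0 w * g w | P in frakP].
Proof.
move=> hP; apply: ub_le_sup; last by exists P.
exists (\sum_(w < m) `|g w|) => _ [P' hP' <-]; apply: ler_sum => w _.
have [P'_ge0 P'_sum1] := frakP_prob hP'.
have P'_le1 : P' 0 w <= 1.
  by rewrite -P'_sum1 (bigD1 w) //= lerDl sumr_ge0.
apply: le_trans (ler_wpM2l (P'_ge0 w) (ler_norm _)) _.
exact: ler_piMl (normr_ge0 _) P'_le1.
Qed.

Lemma sup_weighted_sum_le (g h : 'I_m -> R) (phat : 'rV[R]_m) :
  frakP !=set0 -> (forall w, g w <= h w) ->
  (forall P, frakP P -> \sum_(w < m) P 0 w * h w <= \sum_(w < m) phat 0 w * h w) ->
  sup [set \sum_(w < m) P 0 w * g w | P in frakP] <= \sum_(w < m) phat 0 w * h w.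
Proof.
move=> [P0 hP0] gh phat_opt.
apply: ge_sup; first by exists (\sum_(w < m) P0 0 w * g w), P0.
move=> _ [P hP <-]; apply: le_trans (phat_opt P hP).
by apply: ler_sum => w _; rewrite ler_wpM2l ?(frakP_prob hP).1.
Qed.

End Ambiguity.

Theorem theorem5 (R : realType) (n k m : nat)
  (A D : 'I_k -> nat)
  (xi : 'I_m -> 'I_n -> bool)
  (f : 'I_m -> kset n k -> R)
  (hmono : forall w, k_monotone (f w))
  (hsub : forall w, k_submodular (f w))
  (frakP : set 'rV[R]_m)
  (hP0 : frakP !=set0)
  (hPc : compact frakP)
  (hPd : forall P, frakP P -> prob_dist P)
  (xhat : kset n k) (hxhat : attacker_feasible A xhat)
  (Shat : 'I_m -> kset n k)
  (hSfeas : forall w, def_feasible D (xi w) xhat (Shat w))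
  (hSopt : forall w (S : kset n k), def_feasible D (xi w) xhat S ->
             f w S <= f w (Shat w))
  (phat : 'rV[R]_m) (hphatP : frakP phat)
  (hphat : forall P, frakP P ->
     \sum_(w < m) P 0 w * f w (Shat w) <= \sum_(w < m) phat 0 w * f w (Shat w))
  (ord : 'I_m -> 'I_k -> seq 'I_n)
  (hord_uniq : forall w q, uniq (ord w q))
  (hord_mem : forall w q i, (i \in ord w q) = (Shat w i == Some q)) :
  forall x : kset n k, attacker_feasible A x ->
    PhiA frakP D xi f x >=
    PhiA frakP D xi f xhat -
    \sum_(q < k) \sum_(w < m) \sum_(i <- ord w q)
      phat 0 w
      * marg (f w) q i (Spart (Shat w) q (ord w q) (index i (ord w q)))
      * (xi w i)%:R
      * (xval x q i)%:R.
Proof.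
move=> x _.
pose pen w := \sum_(q < k) \sum_(i <- ord w q)
  marg (f w) q i (Spart (Shat w) q (ord w q) (index i (ord w q)))
  * (xi w i)%:R * (xval x q i)%:R.
have PhiA_xhat_le : PhiA frakP D xi f xhat <= \sum_(w < m) phat 0 w * f w (Shat w).
  exact: (@sup_weighted_sum_le _ _ _ hPd (fun w => Qval D (xi w) (f w) xhat)
    (fun w => f w (Shat w)) phat hP0 (fun w => Qval_le_opt (hSopt w)) hphat).
have sum_pen : \sum_(q < k) \sum_(w < m) \sum_(i <- ord w q)
      phat 0 w * marg (f w) q i (Spart (Shat w) q (ord w q) (index i (ord w q)))
      * (xi w i)%:R * (xval x q i)%:R = \sum_(w < m) phat 0 w * pen w.
  rewrite exchange_big; apply: eq_bigr => w _; rewrite mulr_sumr.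
  by apply: eq_bigr => q _; rewrite mulr_sumr; apply: eq_bigr => i _; rewrite !mulrA.
have pen_le : \sum_(w < m) phat 0 w * f w (Shat w) - \sum_(w < m) phat 0 w * pen w
    <= \sum_(w < m) phat 0 w * Qval D (xi w) (f w) x.
  rewrite -sumrB; apply: ler_sum => w _; rewrite -mulrBr ler_wpM2l ?(hPd _ hphatP).1 //.
  exact: Qval_ge_penalized (hsub w) (hSfeas w) (hord_uniq w) (hord_mem w).
have PhiA_x_ge := weighted_sum_le_sup hPd (fun w => Qval D (xi w) (f w) x) hphatP.
rewrite sum_pen lerBlDr; apply: le_trans PhiA_xhat_le _; rewrite -lerBlDr.
exact: le_trans pen_le PhiA_x_ge.
Qed.
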